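(* Let $v=(v_l,v_h)$ be a valuation profile and let $\sigma=(\sigma_l,\sigma_h)$ be a Nash equilibrium of the winner-bid auction game $WB(v)$. Let $\{\sigma^\lambda\}_{\lambda\in\mathbb{N}}$ be a sequence of mixed-strategy profiles, each weakly payoff-monotone for $WB(v)$, such that $\sigma^\lambda\to\sigma$ as $\lambda\to\infty$. Let $$t(v)\equiv\max\{2c_h/3-c_l,\ ES(v)/3\}+1.$$ Then there exists $\Lambda\in\mathbb{N}$ such that for each $\lambda\geq\Lambda$: (1) if $v_l\geq v_h/3$, then $E_{\sigma^\lambda_l}(b)<c_l+1$; (2) $c_l-1<E_{\sigma^\lambda_h}(b)<c_l+t(v)$; (3) $\pi_l(\sigma^\lambda)<c_l+t(v)$ and $\pi_h(\sigma^\lambda)>c_h+(ES(v)-t(v))$; (4) if $\pi_l(\sigma)>c_l$, then $E_{\sigma^\lambda_l}(b)<E_{\sigma^\lambda_h}(b)$.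
   Context: Two agents $l,h$ jointly own an indivisible good. Agent $i\in\{l,h\}$ has valuation $v_i$; valuations are even nonnegative integers bounded by a maximum valuation $\overline{v}$, with $v_l<v_h$; write $v=(v_l,v_h)$. Agent $i$'s utility from receiving the object and paying $p$ to the other agent is $v_i-p$; from not receiving the object and receiving transfer $p$ it is $p$; agents are expected-utility maximizers. Net valuations are $c_i\equiv v_i/2$ (integers), and the equity surplus is $ES(v)\equiv c_h-c_l$. The bid set is $\mathcal{B}=\{0,1,\dots,\overline{p}\}$ with $\overline{p}$ an integer, $\overline{p}\geq\overline{v}/2$. For $\alpha\in[0,1]$, the $\alpha$-auction (with tie-breaker favoring $h$) is: each agent simultaneously chooses a bid in $\mathcal{B}$; the agent with the strictly higher bid receives the object, and in case of a tie agent $h$ receives the object; the agent receiving the object pays $\alpha\cdot(\text{winner's bid})+(1-\alpha)\cdot(\text{loser's bid})$ to the other agent. The winner-bid auction $WB$ is $\alpha=1$; $WB(v)$ denotes the induced complete-information game with valuations $v$. A mixed strategy of agent $i$ is $\sigma_i\in\Delta(\mathcal{B})$; $E_{\sigma_i}(b)=\sum_{b\in\mathcal{B}}\sigma_i(b)\,b$ is agent $i$'s expected bid; $\pi_i(\sigma)$ is agent $i$'s expected utility under the profile $\sigma=(\sigma_l,\sigma_h)$. A Nash equilibrium is a profile in which each agent's strategy puts positive probability only on bids maximizing her expected utility given the other agent's strategy. A profile $\sigma$ is weakly payoff-monotone for the game if for each agent $i$ and each pair of bids $b,d\in\mathcal{B}$, $\sigma_i(b)>\sigma_i(d)$ implies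 that the expected utility of bid $b$ for agent $i$ against $\sigma_{-i}$ is strictly greater than that of bid $d$. Convergence $\sigma^\lambda\to\sigma$ is pointwise convergence of the probability vectors. *)

From Stdlib Require Import Reals Lra Lia Arith.
Open Scope R_scope.

(* Bids are natural numbers b with b <= pbar (bid set B = {0,...,pbar}).
   A mixed strategy is a function nat -> R; only its values on B matter. *)
Definition is_mixed (pbar : nat) (s : nat -> R) : Prop :=
  (forall b : nat, (b <= pbar)%nat -> 0 <= s b) /\ sum_f_R0 s pbar = 1.

(* The winner pays
   alpha * (winner's bid) + (1 - alpha) * (loser's bid) to the other agent. *)
Definition u_l (alpha vl : R) (bl bh : nat) : R :=
  if (bh <? bl)%nat
  then vl - (alpha * INR bl + (1 - alpha) * INR bh)
  else alpha * INR bh + (1 - alpha) * INR bl.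

Definition u_h (alpha vh : R) (bl bh : nat) : R :=
  if (bh <? bl)%nat
  then alpha * INR bl + (1 - alpha) * INR bh
  else vh - (alpha * INR bh + (1 - alpha) * INR bl).

Definition wb_u_l (vl : R) (bl bh : nat) : R := u_l 1 vl bl bh.
Definition wb_u_h (vh : R) (bl bh : nat) : R := u_h 1 vh bl bh.

Definition U_l (pbar : nat) (vl : R) (sh : nat -> R) (b : nat) : R :=
  sum_f_R0 (fun d => sh d * wb_u_l vl b d) pbar.
Definition U_h (pbar : nat) (vh : R) (sl : nat -> R) (b : nat) : R :=
  sum_f_R0 (fun d => sl d * wb_u_h vh d b) pbar.

Definition pi_l (pbar : nat) (vl : R) (sl sh : nat -> R) : R :=
  sum_f_R0 (fun b => sl b * U_l pbar vl sh b) pbar.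
Definition pi_h (pbar : nat) (vh : R) (sl sh : nat -> R) : R :=
  sum_f_R0 (fun b => sh b * U_h pbar vh sl b) pbar.

Definition Ebid (pbar : nat) (s : nat -> R) : R :=
  sum_f_R0 (fun b => s b * INR b) pbar.

Definition is_NE (pbar : nat) (vl vh : R) (sl sh : nat -> R) : Prop :=
  is_mixed pbar sl /\ is_mixed pbar sh /\
  (forall b d : nat, (b <= pbar)%nat -> (d <= pbar)%nat ->
      0 < sl b -> U_l pbar vl sh d <= U_l pbar vl sh b) /\
  (forall b d : nat, (b <= pbar)%nat -> (d <= pbar)%nat ->
      0 < sh b -> U_h pbar vh sl d <= U_h pbar vh sl b).

Definition weakly_payoff_monotone (pbar : nat) (vl vh : R) (sl sh : nat -> R) : Prop :=
  (forall b d : nat, (b <= pbar)%nat -> (d <= pbar)%nat ->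
      sl b > sl d -> U_l pbar vl sh b > U_l pbar vl sh d) /\
  (forall b d : nat, (b <= pbar)%nat -> (d <= pbar)%nat ->
      sh b > sh d -> U_h pbar vh sl b > U_h pbar vh sl d).

Definition netval (v : nat) : R := INR v / 2.
Definition ES (vl vh : nat) : R := netval vh - netval vl.
Definition t_v (vl vh : nat) : R :=
  Rmax (2 * netval vh / 3 - netval vl) (ES vl vh / 3) + 1.

(* Write v = (2 kl, 2 kh), so c_l = kl and c_h = kh.  The proof has two halves.

   Limit half: payoff monotonicity survives in the limit as two properties of l's limit
   strategy s: (a) if a bid d is dominated for l by a lower bid d' with d + d' >= v_l, then
   s d <= s d' (limit_l_dominated); (b) if s increases from a to B while h's limit payoff
   increases strictly on [a, B), then a + 3B <= 2 v_l, because otherwise h's approximate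
   strategies become unimodal on [a, B) and l could not strictly prefer B to a
   (limit_no_long_increase, resting on U_l_unimodal_no_gain).

   Equilibrium half: let (s, t) be a Nash equilibrium of WB(v) satisfying (a) and (b), and
   B the top of l's support.  If B <= c_l, h's expected bid is exactly c_l.  If B > c_l,
   h bids B for sure, l's weights form a plateau [z, B] above s B, and h's and l's
   incentives at the plateau give 3B <= v_h + z and (z = 0 or z + 3B <= 2 v_l + 1), hence
   B < c_l + t(v).  These give the bounds (equilibrium_bounds); the theorem follows since
   expected bids and payoffs converge and strict inequalities persist eventually. *)

From Stdlib Require Import Reals Arith Lra Lia Classical.
Open Scope R_scope.

Lemma sum_nonneg (f : nat -> R) n :
  (forall i, (i <= n)%nat -> 0 <= f i) -> 0 <= sum_f_R0 f n.
Proof.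
  induction n as [|n IH]; intros Hf; simpl; [apply Hf; lia|].
  assert (0 <= sum_f_R0 f n) by (apply IH; intros; apply Hf; lia).
  assert (0 <= f (S n)) by (apply Hf; lia).
  lra.
Qed.

Lemma sum_ge_term (f : nat -> R) n k :
  (forall i, (i <= n)%nat -> 0 <= f i) -> (k <= n)%nat -> f k <= sum_f_R0 f n.
Proof.
  induction n as [|n IH]; intros Hf Hk; simpl.
  - replace k with 0%nat by lia; lra.
  - assert (0 <= f (S n)) by (apply Hf; lia).
    destruct (Nat.eq_dec k (S n)) as [->|Hne].
    + assert (0 <= sum_f_R0 f n) by (apply sum_nonneg; intros; apply Hf; lia). lra.
    + assert (f k <= sum_f_R0 f n) by (apply IH; [intros; apply Hf|]; lia). lra.
Qed.

Lemma sum_delta n k c :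
  sum_f_R0 (fun i => if Nat.eqb i k then c else 0) n = if Nat.leb k n then c else 0.
Proof.
  induction n as [|n IH]; cbn [sum_f_R0].
  - destruct k; reflexivity.
  - rewrite IH. destruct (Nat.eqb_spec (S n) k) as [<-|Hne].
    + destruct (Nat.leb_spec (S n) n); [lia|]. rewrite Nat.leb_refl. lra.
    + destruct (Nat.leb_spec k n); destruct (Nat.leb_spec k (S n)); try lia; lra.
Qed.

Lemma sum_single (f : nat -> R) n k : (k <= n)%nat ->
  (forall i, (i <= n)%nat -> i <> k -> f i = 0) -> sum_f_R0 f n = f k.
Proof.
  intros Hk Hf.
  rewrite (sum_eq f (fun i => if Nat.eqb i k then f k else 0)).
  - rewrite sum_delta. destruct (Nat.leb_spec k n); [reflexivity|lia].
  - intros i Hi. destruct (Nat.eqb_spec i k) as [->|Hne]; auto.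
Qed.

Lemma sum_trunc (f : nat -> R) n m : (n <= m)%nat ->
  (forall i, (n < i <= m)%nat -> f i = 0) -> sum_f_R0 f m = sum_f_R0 f n.
Proof.
  induction m as [|m IH]; intros Hnm Hf.
  - replace n with 0%nat by lia; reflexivity.
  - destruct (Nat.eq_dec n (S m)) as [->|Hne]; [reflexivity|].
    simpl. rewrite IH by (try lia; intros; apply Hf; lia).
    rewrite (Hf (S m)) by lia. lra.
Qed.

Lemma sum_prefix (f : nat -> R) k n : (k <= n)%nat ->
  sum_f_R0 (fun i => if Nat.leb i k then f i else 0) n = sum_f_R0 f k.
Proof.
  intros Hk. rewrite (sum_trunc _ k n Hk).
  - apply sum_eq. intros i Hi. destruct (Nat.leb_spec i k); [reflexivity|lia].
  - intros i Hi. destruct (Nat.leb_spec i k); [lia|reflexivity].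
Qed.

Definition in_range (a b d : nat) : bool := andb (Nat.leb a d) (Nat.ltb d b).

Lemma sum_range_tele (G : nat -> R) a b n : (a <= b)%nat -> (b <= S n)%nat ->
  sum_f_R0 (fun d => if in_range a b d then G (S d) - G d else 0) n = G b - G a.
Proof.
  intros Hab Hbn. replace b with (a + (b - a))%nat by lia.
  assert (Hbn' : (a + (b - a) <= S n)%nat) by lia. clear Hab Hbn. revert Hbn'.
  induction (b - a)%nat as [|k IH]; intros Hk.
  - rewrite (sum_eq _ (fun _ => 0)), sum_cte; [rewrite Nat.add_0_r; ring|].
    intros d _. unfold in_range.
    destruct (Nat.leb_spec a d); destruct (Nat.ltb_spec d (a + 0)); cbn [andb]; lia || ring.
  - rewrite (sum_eq _ (fun d => (if in_range a (a + k) d then G (S d) - G d else 0)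
                              + (if Nat.eqb d (a + k) then G (S (a + k)) - G (a + k)%nat else 0))).
    + rewrite sum_plus, IH, sum_delta by lia.
      destruct (Nat.leb_spec (a + k) n); [|lia].
      replace (a + S k)%nat with (S (a + k)) by lia. ring.
    + intros d _. unfold in_range.
      destruct (Nat.leb_spec a d); destruct (Nat.ltb_spec d (a + k));
        destruct (Nat.ltb_spec d (a + S k)); destruct (Nat.eqb_spec d (a + k));
        cbn [andb]; try lia; try subst; ring.
Qed.

Lemma sum_reflect (f : nat -> R) n :
  sum_f_R0 f n = sum_f_R0 (fun i => f (n - i)%nat) n.
Proof.
  revert f; induction n as [|n IH]; intros f; [reflexivity|].
  rewrite (decomp_sum f (S n)) by lia. rewrite tech5. simpl pred.
  rewrite (IH (fun i => f (S i))). replace (S n - S n)%nat with 0%nat by lia.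
  rewrite (sum_eq (fun i => f (S (n - i))) (fun i => f (S n - i)%nat))
    by (intros; f_equal; lia).
  lra.
Qed.

Lemma sum_le_prefix (f : nat -> R) m n : (m <= n)%nat ->
  (forall i, (i <= n)%nat -> 0 <= f i) -> sum_f_R0 f m <= sum_f_R0 f n.
Proof.
  intros Hmn Hf. rewrite <- (sum_prefix f m n Hmn). apply sum_Rle. intros i Hi.
  destruct (Nat.leb i m); [lra|auto].
Qed.

Lemma sum_ge_count (f : nat -> R) c z n :
  (forall i, (i <= n)%nat -> 0 <= f i) -> (forall i, (z <= i <= n)%nat -> c <= f i) ->
  INR (S n - z) * c <= sum_f_R0 f n.
Proof.
  induction n as [|n IH]; intros Hf Hc; cbn [sum_f_R0].
  - destruct z as [|z]; simpl; [specialize (Hc 0%nat ltac:(lia)); lra|].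
    rewrite Rmult_0_l. apply Hf; lia.
  - destruct (le_lt_dec z (S n)) as [Hz|Hz].
    + replace (S (S n) - z)%nat with (S (S n - z)) by lia. rewrite S_INR.
      assert (INR (S n - z) * c <= sum_f_R0 f n) by (apply IH; intros; [apply Hf|apply Hc]; lia).
      assert (c <= f (S n)) by (apply Hc; lia). lra.
    + replace (S (S n) - z)%nat with 0%nat by lia. rewrite Rmult_0_l.
      exact (sum_nonneg f (S n) Hf).
Qed.

Lemma sum_mult_l (c : R) (f : nat -> R) n :
  c * sum_f_R0 f n = sum_f_R0 (fun i => c * f i) n.
Proof. rewrite scal_sum. apply sum_eq. intros; ring. Qed.

Lemma sum_swap (f : nat -> nat -> R) n m :
  sum_f_R0 (fun i => sum_f_R0 (fun j => f i j) m) n =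
  sum_f_R0 (fun j => sum_f_R0 (fun i => f i j) n) m.
Proof.
  induction n as [|n IH]; simpl; [reflexivity|]. rewrite IH, <- sum_plus. reflexivity.
Qed.

Lemma mean_ge P (w f : nat -> R) X : is_mixed P w ->
  (forall i, (i <= P)%nat -> 0 < w i -> X <= f i) -> X <= sum_f_R0 (fun i => w i * f i) P.
Proof.
  intros [Hw0 Hw1] Hf. apply Rle_trans with (sum_f_R0 (fun i => w i * X) P).
  - rewrite <- scal_sum, Hw1. lra.
  - apply sum_Rle. intros i Hi. destruct (Hw0 i Hi) as [Hp|He].
    + specialize (Hf i Hi Hp). nra.
    + rewrite <- He. lra.
Qed.

Lemma mean_le P (w f : nat -> R) X : is_mixed P w ->
  (forall i, (i <= P)%nat -> 0 < w i -> f i <= X) -> sum_f_R0 (fun i => w i * f i) P <= X.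
Proof.
  intros [Hw0 Hw1] Hf. apply Rle_trans with (sum_f_R0 (fun i => w i * X) P).
  - apply sum_Rle. intros i Hi. destruct (Hw0 i Hi) as [Hp|He].
    + specialize (Hf i Hi Hp). nra.
    + rewrite <- He. lra.
  - rewrite <- scal_sum, Hw1. lra.
Qed.

Lemma mean_le_center (w : nat -> R) k :
  (forall d, (d <= 2 * k)%nat -> 0 <= w d) -> sum_f_R0 w (2 * k) = 1 ->
  (forall d, (k <= d <= 2 * k)%nat -> w d <= w (2 * k - d)%nat) ->
  sum_f_R0 (fun d => w d * INR d) (2 * k) <= INR k.
Proof.
  intros Hw0 Hw1 Hmirror.
  set (F := fun d => w d * (INR d - INR k)).
  assert (Hpair : sum_f_R0 F (2 * k) + sum_f_R0 (fun d => F (2 * k - d)%nat) (2 * k) <= 0).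
  { rewrite <- sum_plus. apply Rle_trans with (sum_f_R0 (fun _ => 0) (2 * k));
      [|rewrite sum_cte; lra].
    apply sum_Rle. intros d Hd. unfold F. rewrite minus_INR, mult_INR by lia. simpl (INR 2).
    destruct (le_lt_dec k d).
    - pose proof (Hmirror d ltac:(lia)). assert (INR k <= INR d) by (apply le_INR; lia). nra.
    - pose proof (Hmirror (2 * k - d)%nat ltac:(lia)) as Hm.
      replace (2 * k - (2 * k - d))%nat with d in Hm by lia.
      assert (INR d < INR k) by (apply lt_INR; lia). nra. }
  rewrite <- sum_reflect in Hpair. unfold F in Hpair.
  rewrite (sum_eq _ (fun d => w d * INR d - w d * INR k)), minus_sum, <- scal_sum, Hw1 in Hpair
    by (intros; ring).
  lra.
Qed.

Lemma max_exists (Q : nat -> Prop) n : (exists b, (b <= n)%nat /\ Q b) ->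
  exists b, (b <= n)%nat /\ Q b /\ forall d, (b < d <= n)%nat -> ~ Q d.
Proof.
  induction n as [|n IH]; intros [b [Hb Qb]].
  - exists b. repeat split; auto. intros; lia.
  - destruct (classic (Q (S n))) as [HQ|HQ].
    + exists (S n). repeat split; auto. intros; lia.
    + destruct IH as [c [Hc [Qc Hmax]]].
      { exists b. split; auto. destruct (Nat.eq_dec b (S n)); [subst; contradiction|lia]. }
      exists c. repeat split; auto. intros d Hd.
      destruct (Nat.eq_dec d (S n)) as [->|]; auto. apply Hmax; lia.
Qed.

Lemma min_exists (Q : nat -> Prop) n : (exists b, (b <= n)%nat /\ Q b) ->
  exists b, (b <= n)%nat /\ Q b /\ forall d, (d < b)%nat -> ~ Q d.
Proof.
  intros [b [Hb Qb]]. revert n Hb. induction b as [b IH] using (well_founded_induction lt_wf).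
  intros n Hb. destruct (classic (exists d, (d < b)%nat /\ Q d)) as [[d [Hd Qd]]|Hno].
  - exact (IH d Hd Qd n ltac:(lia)).
  - exists b. repeat split; auto. intros d Hd Qd. apply Hno; eauto.
Qed.

Lemma support_nonempty P (w : nat -> R) : is_mixed P w -> exists b, (b <= P)%nat /\ 0 < w b.
Proof.
  intros [Hw0 Hw1]. apply NNPP. intros Hno.
  assert (Hz : sum_f_R0 w P = sum_f_R0 (fun _ => 0) P).
  { apply sum_eq. intros i Hi. destruct (Hw0 i Hi); auto. exfalso; apply Hno; eauto. }
  rewrite sum_cte in Hz. lra.
Qed.

Lemma support_max P (w : nat -> R) : is_mixed P w ->
  exists B, (B <= P)%nat /\ 0 < w B /\ forall d, (B < d <= P)%nat -> w d = 0.
Proof.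
  intros Hw. destruct (max_exists _ P (support_nonempty P w Hw)) as [B [HB [HwB Hmax]]].
  exists B. repeat split; auto. intros d Hd.
  destruct (proj1 Hw d ltac:(lia)) as [Hp|]; auto. exfalso; exact (Hmax d Hd Hp).
Qed.

Lemma support_min P (w : nat -> R) : is_mixed P w ->
  exists m, (m <= P)%nat /\ 0 < w m /\ forall d, (d < m)%nat -> w d = 0.
Proof.
  intros Hw. destruct (min_exists _ P (support_nonempty P w Hw)) as [m [Hm [Hwm Hmin]]].
  exists m. repeat split; auto. intros d Hd.
  destruct (proj1 Hw d ltac:(lia)) as [Hp|]; auto. exfalso; exact (Hmin d Hd Hp).
Qed.

Lemma Ebid_le_top P (w : nat -> R) B : is_mixed P w ->
  (forall d, (B < d <= P)%nat -> w d = 0) -> Ebid P w <= INR B.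
Proof.
  intros Hw Htop. apply mean_le; auto. intros b Hb Hp. apply le_INR.
  destruct (le_lt_dec b B); auto. rewrite Htop in Hp by lia. lra.
Qed.

Lemma Ebid_lt_top P (w : nat -> R) B b : is_mixed P w ->
  (forall d, (B < d <= P)%nat -> w d = 0) -> (b < B)%nat -> (b <= P)%nat -> 0 < w b ->
  Ebid P w < INR B.
Proof.
  intros [Hw0 Hw1] Htop HbB HbP Hwb.
  set (gap := fun d => w d * (INR B - INR d)).
  assert (Hgap : sum_f_R0 gap P = INR B - Ebid P w).
  { unfold Ebid. replace (INR B) with (INR B * sum_f_R0 w P) by (rewrite Hw1; ring).
    rewrite scal_sum, <- minus_sum.
    apply sum_eq. intros; unfold gap; ring. }
  assert (Hgb : gap b <= sum_f_R0 gap P).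
  { apply sum_ge_term; auto. intros d Hd. unfold gap. destruct (le_lt_dec d B).
    - apply Rmult_le_pos; [auto|]. assert (INR d <= INR B) by (apply le_INR; lia). lra.
    - rewrite Htop by lia. lra. }
  assert (INR b < INR B) by (apply lt_INR; lia).
  assert (0 < gap b) by (apply Rmult_lt_0_compat; lra).
  lra.
Qed.

Definition eventually (Q : nat -> Prop) : Prop := exists N, forall n, (N <= n)%nat -> Q n.

Lemma eventually_and (Q1 Q2 : nat -> Prop) :
  eventually Q1 -> eventually Q2 -> eventually (fun n => Q1 n /\ Q2 n).
Proof.
  intros [N1 H1] [N2 H2]. exists (Nat.max N1 N2). intros n Hn. split; [apply H1|apply H2]; lia.
Qed.

Lemma eventually_mono (Q1 Q2 : nat -> Prop) :
  (forall n, Q1 n -> Q2 n) -> eventually Q1 -> eventually Q2.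
Proof. intros H [N HN]. exists N. auto. Qed.

Lemma eventually_always (Q : nat -> Prop) : (forall n, Q n) -> eventually Q.
Proof. intros H. exists 0%nat. auto. Qed.

Lemma eventually_forall_le (Q : nat -> nat -> Prop) k :
  (forall i, (i <= k)%nat -> eventually (Q i)) ->
  eventually (fun n => forall i, (i <= k)%nat -> Q i n).
Proof.
  induction k as [|k IH]; intros H.
  - apply (eventually_mono (Q 0%nat)); [|apply H; lia].
    intros n Hn i Hi. replace i with 0%nat by lia. exact Hn.
  - apply (eventually_mono (fun n => (forall i, (i <= k)%nat -> Q i n) /\ Q (S k) n)).
    + intros n [Hk HSk] i Hi. destruct (Nat.eq_dec i (S k)) as [->|]; auto. apply Hk; lia.
    + apply eventually_and; [apply IH; intros; apply H; lia|apply H; lia].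
Qed.

Lemma eventually_lt (a b : nat -> R) la lb : Un_cv a la -> Un_cv b lb -> la < lb ->
  eventually (fun n => a n < b n).
Proof.
  intros Ha Hb Hl.
  destruct (Ha ((lb - la) / 2)) as [N1 H1]; [lra|].
  destruct (Hb ((lb - la) / 2)) as [N2 H2]; [lra|].
  exists (Nat.max N1 N2). intros n Hn.
  specialize (H1 n ltac:(lia)). specialize (H2 n ltac:(lia)).
  unfold R_dist in *. apply Rabs_def2 in H1. apply Rabs_def2 in H2. lra.
Qed.

Lemma cv_const c : Un_cv (fun _ => c) c.
Proof. intros e He. exists 0%nat. intros. unfold R_dist. rewrite Rminus_diag, Rabs_R0. lra. Qed.

Lemma cv_sum (f : nat -> nat -> R) (g : nat -> R) k :
  (forall i, (i <= k)%nat -> Un_cv (fun n => f n i) (g i)) ->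
  Un_cv (fun n => sum_f_R0 (f n) k) (sum_f_R0 g k).
Proof.
  induction k as [|k IH]; intros H; simpl; [apply H; lia|].
  apply CV_plus; [apply IH; intros; apply H|apply H]; lia.
Qed.

Lemma cv_weighted P (w : nat -> nat -> R) (w' : nat -> R) (c : nat -> nat -> R) (c' : nat -> R) :
  (forall d, (d <= P)%nat -> Un_cv (fun n => w n d) (w' d)) ->
  (forall d, (d <= P)%nat -> Un_cv (fun n => c n d) (c' d)) ->
  Un_cv (fun n => sum_f_R0 (fun d => w n d * c n d) P) (sum_f_R0 (fun d => w' d * c' d) P).
Proof.
  intros Hw Hc. apply (cv_sum (fun n d => w n d * c n d)). intros d Hd. apply CV_mult; auto.
Qed.

Lemma wb_u_l_eq v bl bh : wb_u_l v bl bh = if Nat.ltb bh bl then v - INR bl else INR bh.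
Proof. unfold wb_u_l, u_l. destruct (Nat.ltb bh bl); ring. Qed.

Lemma wb_u_h_eq v bl bh : wb_u_h v bl bh = if Nat.ltb bh bl then INR bl else v - INR bh.
Proof. unfold wb_u_h, u_h. destruct (Nat.ltb bh bl); ring. Qed.

(* Exact loss of l from raising her bid b to b + 1: she pays one more whenever she
   already won, and she now also wins against b at price b + 1 instead of receiving b. *)
Lemma U_l_succ_loss P vl (t : nat -> R) b : (S b <= P)%nat ->
  U_l P vl t b - U_l P vl t (S b) = sum_f_R0 t b + t b * (2 * INR b - vl).
Proof.
  intros Hb. unfold U_l. rewrite <- minus_sum.
  rewrite (sum_eq _ (fun e => (if Nat.leb e b then t e else 0)
                               + (if Nat.eqb e b then t b * (2 * INR b - vl) else 0))).
  - rewrite sum_plus, sum_prefix, sum_delta by lia.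
    destruct (Nat.leb_spec b P); [reflexivity|lia].
  - intros e He. rewrite !wb_u_l_eq, S_INR.
    destruct (Nat.leb_spec e b); destruct (Nat.eqb_spec e b);
      destruct (Nat.ltb_spec e b); destruct (Nat.ltb_spec e (S b)); try lia; try subst; ring.
Qed.

(* Exact gain of h from raising her bid e to e + 1: she now wins against e + 1 but pays
   one more against every lower bid. *)
Lemma U_h_succ_gain P vh (s : nat -> R) e : (S e <= P)%nat ->
  U_h P vh s (S e) - U_h P vh s e = s (S e) * (vh - 2 * INR (S e)) - sum_f_R0 s e.
Proof.
  intros He. unfold U_h. rewrite <- minus_sum.
  rewrite (sum_eq _ (fun d => (if Nat.eqb d (S e) then s (S e) * (vh - 2 * INR (S e)) else 0)
                               - (if Nat.leb d e then s d else 0))).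
  - rewrite minus_sum, sum_prefix, sum_delta by lia.
    destruct (Nat.leb_spec (S e) P); [reflexivity|lia].
  - intros d Hd. rewrite !wb_u_h_eq, S_INR.
    destruct (Nat.leb_spec d e); destruct (Nat.eqb_spec d (S e));
      destruct (Nat.ltb_spec e d); destruct (Nat.ltb_spec (S e) d); try lia; try subst;
      rewrite ?S_INR; ring.
Qed.

Lemma U_l_below_support P vl (t : nat -> R) b :
  (forall e, (e < b)%nat -> t e = 0) -> U_l P vl t b = Ebid P t.
Proof.
  intros Ht. unfold U_l, Ebid. apply sum_eq. intros e He. rewrite wb_u_l_eq.
  destruct (Nat.ltb_spec e b); [rewrite Ht by lia; ring|reflexivity].
Qed.

Lemma U_h_below_support P vh (s : nat -> R) e :
  (forall d, (d <= e)%nat -> s d = 0) -> U_h P vh s e = Ebid P s.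
Proof.
  intros Hs. unfold U_h, Ebid. apply sum_eq. intros d Hd. rewrite wb_u_h_eq.
  destruct (Nat.ltb_spec e d); [reflexivity|rewrite Hs by lia; ring].
Qed.

Lemma U_h_above_support P vh (s : nat -> R) e : is_mixed P s ->
  (forall d, (e < d <= P)%nat -> s d = 0) -> U_h P vh s e = vh - INR e.
Proof.
  intros [_ Hs1] Htop. unfold U_h.
  rewrite (sum_eq _ (fun d => s d * (vh - INR e))), <- scal_sum, Hs1; [ring|].
  intros d Hd. rewrite wb_u_h_eq. destruct (Nat.ltb_spec e d); [rewrite Htop by lia; ring|ring].
Qed.

Lemma U_l_at_netval P kl (t : nat -> R) : is_mixed P t ->
  (forall e, (kl < e <= P)%nat -> t e = 0) -> U_l P (INR (2 * kl)) t kl = INR kl.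
Proof.
  intros [_ Ht1] Htop. unfold U_l.
  rewrite (sum_eq _ (fun e => t e * INR kl)), <- scal_sum, Ht1; [ring|].
  intros e He. rewrite wb_u_l_eq, mult_INR. simpl (INR 2).
  destruct (Nat.ltb_spec e kl); [ring|].
  destruct (Nat.eq_dec e kl) as [->|]; [reflexivity|rewrite Htop by lia; ring].
Qed.

(* In every outcome the two payoffs add up to v_l or v_h. *)
Lemma total_payoff_le P vl vh (s t : nat -> R) : vl <= vh -> is_mixed P s -> is_mixed P t ->
  pi_l P vl s t + pi_h P vh s t <= vh.
Proof.
  intros Hv [Hs0 Hs1] [Ht0 Ht1].
  assert (Hh : pi_h P vh s t =
    sum_f_R0 (fun b => s b * sum_f_R0 (fun d => t d * wb_u_h vh b d) P) P).
  { unfold pi_h, U_h.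
    rewrite (sum_eq _ (fun d => sum_f_R0 (fun b => s b * (t d * wb_u_h vh b d)) P))
      by (intros; rewrite sum_mult_l; apply sum_eq; intros; ring).
    rewrite (sum_swap (fun d b => s b * (t d * wb_u_h vh b d))).
    apply sum_eq. intros. rewrite sum_mult_l. reflexivity. }
  rewrite Hh. unfold pi_l, U_l. rewrite <- sum_plus.
  apply Rle_trans with (sum_f_R0 (fun b => s b * vh) P);
    [|rewrite <- scal_sum, Hs1; lra].
  apply sum_Rle. intros b Hb. rewrite <- Rmult_plus_distr_l.
  apply Rmult_le_compat_l; [auto|]. rewrite <- sum_plus.
  apply Rle_trans with (sum_f_R0 (fun d => t d * vh) P);
    [|rewrite <- scal_sum, Ht1; lra].
  apply sum_Rle. intros d Hd. rewrite <- Rmult_plus_distr_l, wb_u_l_eq, wb_u_h_eq.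
  apply Rmult_le_compat_l; [auto|]. destruct (Nat.ltb d b); lra.
Qed.

Lemma U_l_dominated P vl (t : nat -> R) d d' :
  (forall e, (e <= P)%nat -> 0 <= t e) -> (d' <= d)%nat -> vl <= INR d + INR d' ->
  U_l P vl t d <= U_l P vl t d'.
Proof.
  intros Ht0 Hdd Hv. apply sum_Rle. intros e He. apply Rmult_le_compat_l; [auto|].
  rewrite !wb_u_l_eq. assert (INR d' <= INR d) by (apply le_INR; lia).
  destruct (Nat.ltb_spec e d); destruct (Nat.ltb_spec e d'); try lia; try lra.
  assert (INR d' <= INR e) by (apply le_INR; lia). lra.
Qed.

Lemma U_l_unimodal_no_gain P v (t : nat -> R) a p B :
  (forall e, (e <= P)%nat -> 0 <= t e) -> (a <= p)%nat -> (p < B)%nat -> (B <= P)%nat ->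
  (forall e, (a <= e < p)%nat -> t e <= t p /\ (e + B < v)%nat) ->
  (forall e, (p < e < B)%nat -> t p <= t e /\ (v < e + B)%nat) ->
  (2 * v < a + 3 * B)%nat ->
  U_l P (INR v) t B <= U_l P (INR v) t a.
Proof.
  intros Ht0 Hap HpB HBP Hleft Hright Hbig.
  (* G is a quadratic whose increments G (e + 1) - G e are t p * (e + B - v). *)
  set (G := fun d : nat => t p * (INR d * (INR d - 1) / 2 + INR d * (INR B - INR v))).
  assert (Hpt : forall e, (e <= P)%nat ->
    (if in_range a B e then G (S e) - G e else 0)
    <= t e * wb_u_l (INR v) a e - t e * wb_u_l (INR v) B e).
  { intros e He. unfold in_range, G. rewrite !wb_u_l_eq. pose proof (Ht0 e He) as Hte.
    destruct (Nat.leb_spec a e); destruct (Nat.ltb_spec e B); destruct (Nat.ltb_spec e a);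
      cbn [andb]; try lia.
    - rewrite S_INR.
      replace (t p * ((INR e + 1) * (INR e + 1 - 1) / 2 + (INR e + 1) * (INR B - INR v)) -
               t p * (INR e * (INR e - 1) / 2 + INR e * (INR B - INR v)))
        with (t p * (INR e + INR B - INR v)) by field.
      destruct (lt_eq_lt_dec e p) as [[Hlt| ->]|Hgt].
      + destruct (Hleft e ltac:(lia)) as [Hord Hsign].
        assert (Hx : INR (e + B) < INR v) by (apply lt_INR; lia). rewrite plus_INR in Hx.
        assert (0 <= (t p - t e) * (INR v - (INR e + INR B))) by (apply Rmult_le_pos; lra).
        nra.
      + lra.
      + destruct (Hright e ltac:(lia)) as [Hord Hsign].
        assert (Hx : INR v < INR (e + B)) by (apply lt_INR; lia). rewrite plus_INR in Hx.
        assert (0 <= (t e - t p) * ((INR e + INR B) - INR v)) by (apply Rmult_le_pos; lra).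
        nra.
    - lra.
    - assert (INR a < INR B) by (apply lt_INR; lia). nra. }
  pose proof (sum_Rle _ _ P Hpt) as Hsum.
  rewrite sum_range_tele, minus_sum in Hsum by lia.
  assert (HG : 0 <= G B - G a).
  { unfold G.
    replace (t p * (INR B * (INR B - 1) / 2 + INR B * (INR B - INR v)) -
             t p * (INR a * (INR a - 1) / 2 + INR a * (INR B - INR v)))
      with (t p * ((INR B - INR a) * ((INR a + 3 * INR B - 1 - 2 * INR v) / 2))) by field.
    assert (INR a < INR B) by (apply lt_INR; lia).
    assert (Hx : INR (2 * v) + 1 <= INR (a + 3 * B))
      by (rewrite <- S_INR; apply le_INR; lia).
    rewrite plus_INR, !mult_INR in Hx. simpl (INR 2) in Hx. simpl (INR 3) in Hx.
    apply Rmult_le_pos; [apply Ht0; lia|]. apply Rmult_le_pos; lra. }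
  unfold U_l. lra.
Qed.

Lemma wpm_l_le P vl vh (sl sh : nat -> R) b d : weakly_payoff_monotone P vl vh sl sh ->
  (b <= P)%nat -> (d <= P)%nat -> U_l P vl sh b <= U_l P vl sh d -> sl b <= sl d.
Proof.
  intros [Hm _] Hb Hd HU. destruct (Rle_or_lt (sl b) (sl d)) as [|Hlt]; auto.
  specialize (Hm b d Hb Hd Hlt). lra.
Qed.

Lemma wpm_h_le P vl vh (sl sh : nat -> R) b d : weakly_payoff_monotone P vl vh sl sh ->
  (b <= P)%nat -> (d <= P)%nat -> U_h P vh sl b <= U_h P vh sl d -> sh b <= sh d.
Proof.
  intros [_ Hm] Hb Hd HU. destruct (Rle_or_lt (sh b) (sh d)) as [|Hlt]; auto.
  specialize (Hm b d Hb Hd Hlt). lra.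
Qed.

Section Convergence.
Variables (P : nat) (sll shl : nat -> nat -> R) (sl sh : nat -> R).
Hypothesis Hcv_l : forall b, (b <= P)%nat -> Un_cv (fun n => sll n b) (sl b).
Hypothesis Hcv_h : forall b, (b <= P)%nat -> Un_cv (fun n => shl n b) (sh b).

Lemma cv_U_l vl b : Un_cv (fun n => U_l P vl (shl n) b) (U_l P vl sh b).
Proof. apply cv_weighted; auto. intros; apply cv_const. Qed.

Lemma cv_U_h vh b : Un_cv (fun n => U_h P vh (sll n) b) (U_h P vh sl b).
Proof. apply cv_weighted; auto. intros; apply cv_const. Qed.

Lemma cv_Ebid_l : Un_cv (fun n => Ebid P (sll n)) (Ebid P sl).
Proof. apply cv_weighted; auto. intros; apply cv_const. Qed.

Lemma cv_Ebid_h : Un_cv (fun n => Ebid P (shl n)) (Ebid P sh).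
Proof. apply cv_weighted; auto. intros; apply cv_const. Qed.

Lemma cv_pi_l vl : Un_cv (fun n => pi_l P vl (sll n) (shl n)) (pi_l P vl sl sh).
Proof. apply cv_weighted; auto. intros; apply cv_U_l. Qed.

Lemma cv_pi_h vh : Un_cv (fun n => pi_h P vh (sll n) (shl n)) (pi_h P vh sl sh).
Proof. apply cv_weighted; auto. intros; apply cv_U_h. Qed.

End Convergence.

Definition increasing_on (f : nat -> R) (a b : nat) : Prop :=
  forall e e', (a <= e)%nat -> (e < e')%nat -> (e' < b)%nat -> f e < f e'.

Lemma increasing_on_succ (f : nat -> R) a b :
  (forall e, (a <= e)%nat -> (S e < b)%nat -> f e < f (S e)) -> increasing_on f a b.
Proof.
  intros Hstep e e' Hae Hee' He'b. induction e' as [|e' IH]; [lia|].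
  destruct (Nat.eq_dec e e') as [->|Hne]; [apply Hstep; lia|].
  apply Rlt_trans with (f e'); [apply IH; lia|apply Hstep; lia].
Qed.

Section LimitProfile.
Variables (P kl : nat) (vh : R) (sll shl : nat -> nat -> R) (sl : nat -> R).
Hypothesis Hh_nonneg : forall n e, (e <= P)%nat -> 0 <= shl n e.
Hypothesis Hmon : forall n, weakly_payoff_monotone P (INR (2 * kl)) vh (sll n) (shl n).
Hypothesis Hcv_l : forall b, (b <= P)%nat -> Un_cv (fun n => sll n b) (sl b).

Lemma limit_l_dominated d d' : (d' <= d)%nat -> (d <= P)%nat ->
  INR (2 * kl) <= INR d + INR d' -> sl d <= sl d'.
Proof.
  intros Hdd HdP Hv.
  apply (@Rle_cv_lim (fun n => sll n d) (fun n => sll n d')); [|apply Hcv_l; lia..].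
  intros n. apply (wpm_l_le _ _ _ _ _ _ _ (Hmon n)); try lia.
  apply U_l_dominated; auto.
Qed.

Lemma eventually_h_ordered e e' : (e <= P)%nat -> (e' <= P)%nat ->
  U_h P vh sl e < U_h P vh sl e' -> eventually (fun n => shl n e <= shl n e').
Proof.
  intros He He' HU.
  apply (eventually_mono (fun n => U_h P vh (sll n) e < U_h P vh (sll n) e')).
  - intros n Hn. apply (wpm_h_le _ _ _ _ _ _ _ (Hmon n)); auto. lra.
  - apply (eventually_lt _ _ _ _ (cv_U_h P sll sl Hcv_l vh e) (cv_U_h P sll sl Hcv_l vh e') HU).
Qed.

(* If l's limit weight increases from a to B while h's limit payoff increases strictly on
   [a, B), then a + 3B <= 2 v_l: otherwise h's strategies become unimodal on [a, B) and
   l could not strictly prefer B to a, contradicting payoff monotonicity. *)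
Lemma limit_no_long_increase a B : (a < B)%nat -> (B <= P)%nat -> sl a < sl B ->
  increasing_on (U_h P vh sl) a B -> (a + 3 * B <= 2 * (2 * kl))%nat.
Proof.
  intros HaB HBP Hsl Hinc.
  destruct (le_lt_dec (a + 3 * B) (2 * (2 * kl))) as [|Hbig]; auto. exfalso.
  set (p := Nat.max a (Nat.min (2 * kl - B) (B - 1))).
  assert (Hl_order : eventually (fun n => sll n a < sll n B))
    by (apply (eventually_lt _ _ _ _ (Hcv_l a ltac:(lia)) (Hcv_l B HBP)); auto).
  assert (Hh_unimodal : eventually (fun n => forall e, (e <= P)%nat ->
      ((a <= e < p)%nat -> shl n e <= shl n p) /\ ((p < e < B)%nat -> shl n p <= shl n e))).
  { apply eventually_forall_le. intros e He. apply eventually_and.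
    - destruct (le_lt_dec a e); [destruct (lt_dec e p)|].
      + apply (eventually_mono (fun n => shl n e <= shl n p)); [auto|].
        apply eventually_h_ordered; try lia. apply Hinc; lia.
      + apply eventually_always; intros; lia.
      + apply eventually_always; intros; lia.
    - destruct (lt_dec p e); [destruct (lt_dec e B)|].
      + apply (eventually_mono (fun n => shl n p <= shl n e)); [auto|].
        apply eventually_h_ordered; try lia. apply Hinc; lia.
      + apply eventually_always; intros; lia.
      + apply eventually_always; intros; lia. }
  destruct (eventually_and _ _ Hl_order Hh_unimodal) as [N HN].
  destruct (HN N (le_n N)) as [HsN HtN].
  assert (Hgain : U_l P (INR (2 * kl)) (shl N) a < U_l P (INR (2 * kl)) (shl N) B)
    by (apply (proj1 (Hmon N)); auto; lia).
  assert (Hno_gain : U_l P (INR (2 * kl)) (shl N) B <= U_l P (INR (2 * kl)) (shl N) a).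
  { apply (U_l_unimodal_no_gain P (2 * kl) (shl N) a p B); auto; try lia.
    - intros e He. split; [apply HtN|]; lia.
    - intros e He. split; [apply HtN|]; lia. }
  lra.
Qed.

End LimitProfile.

Lemma netval_double k : netval (2 * k) = INR k.
Proof. unfold netval. rewrite mult_INR. simpl. lra. Qed.

Lemma t_v_ge kl kh :
  (INR kh - INR kl) / 3 + 1 <= t_v (2 * kl) (2 * kh) /\
  2 * INR kh / 3 - INR kl + 1 <= t_v (2 * kl) (2 * kh).
Proof.
  unfold t_v, ES. rewrite !netval_double.
  pose proof (Rmax_l (2 * INR kh / 3 - INR kl) ((INR kh - INR kl) / 3)).
  pose proof (Rmax_r (2 * INR kh / 3 - INR kl) ((INR kh - INR kl) / 3)). lra.
Qed.

Section Equilibrium.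
Variables (P kl kh B : nat) (s t : nat -> R).
Hypothesis Hk : (kl < kh)%nat.
Hypothesis HkP : (kh <= P)%nat.
Hypothesis Hs : is_mixed P s.
Hypothesis Ht : is_mixed P t.
Hypothesis Hbr_l : forall b d, (b <= P)%nat -> (d <= P)%nat -> 0 < s b ->
  U_l P (INR (2 * kl)) t d <= U_l P (INR (2 * kl)) t b.
Hypothesis Hbr_h : forall b d, (b <= P)%nat -> (d <= P)%nat -> 0 < t b ->
  U_h P (INR (2 * kh)) s d <= U_h P (INR (2 * kh)) s b.
Hypothesis Hl_dom : forall d d', (d' <= d)%nat -> (d <= P)%nat ->
  INR (2 * kl) <= INR d + INR d' -> s d <= s d'.
Hypothesis Hno_run : forall a b, (a < b)%nat -> (b <= P)%nat -> s a < s b ->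
  increasing_on (U_h P (INR (2 * kh)) s) a b -> (a + 3 * b <= 2 * (2 * kl))%nat.
Hypothesis HBP : (B <= P)%nat.
Hypothesis HsB : 0 < s B.
Hypothesis Hs_top : forall d, (B < d <= P)%nat -> s d = 0.

(* h never outbids B, since any such bid wins at a higher price. *)
Lemma h_top : forall e, (B < e <= P)%nat -> t e = 0.
Proof.
  intros e He. destruct (proj1 Ht e ltac:(lia)) as [Hp|]; auto.
  specialize (Hbr_h e B ltac:(lia) HBP Hp).
  rewrite !(U_h_above_support P _ s) in Hbr_h by (auto; intros; apply Hs_top; lia).
  assert (INR B < INR e) by (apply lt_INR; lia). lra.
Qed.

(* h can guarantee v_h - B by bidding B, and total payoffs are at most v_h. *)
Lemma pi_h_ge_top : INR (2 * kh) - INR B <= pi_h P (INR (2 * kh)) s t.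
Proof.
  apply mean_ge; auto. intros e He Hp. specialize (Hbr_h e B He HBP Hp).
  rewrite (U_h_above_support P _ s B) in Hbr_h; auto.
Qed.

Lemma pi_l_le_top : pi_l P (INR (2 * kl)) s t <= INR B.
Proof.
  pose proof pi_h_ge_top.
  assert (INR (2 * kl) <= INR (2 * kh)) by (apply le_INR; lia).
  pose proof (total_payoff_le P (INR (2 * kl)) (INR (2 * kh)) s t ltac:(lra) Hs Ht). lra.
Qed.

(* If l never bids above c_l, h's expected bid is exactly c_l: a lower expected bid would
   make c_l a strictly better reply for l than any bid up to h's lowest bid m, so l would
   only bid above m, and h's bid m would earn E s <= c_l < v_h - B, her payoff at B. *)
Lemma low_top_Ebid_h : (B <= kl)%nat -> Ebid P t = INR kl.
Proof.
  intros HBkl.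
  assert (Ht_top : forall e, (kl < e <= P)%nat -> t e = 0) by (intros; apply h_top; lia).
  assert (HEt : Ebid P t <= INR kl)
    by (apply Ebid_le_top; auto).
  destruct (Rle_lt_or_eq_dec _ _ HEt) as [Hlt|]; auto. exfalso.
  destruct (support_min P t Ht) as [m [HmP [Htm Hbelow]]].
  assert (Hs_low : forall b, (b <= m)%nat -> s b = 0).
  { intros b Hb. destruct (proj1 Hs b ltac:(lia)) as [Hp|]; auto. exfalso.
    specialize (Hbr_l b kl ltac:(lia) ltac:(lia) Hp).
    rewrite U_l_at_netval, U_l_below_support in Hbr_l; auto; [lra|].
    intros e He. apply Hbelow. lia. }
  specialize (Hbr_h m B HmP HBP Htm).
  rewrite (U_h_below_support P _ s m), (U_h_above_support P _ s B) in Hbr_h; auto.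
  assert (Ebid P s <= INR B) by (apply Ebid_le_top; auto).
  assert (INR B <= INR kl) by (apply le_INR; lia).
  assert (INR kl < INR kh) by (apply lt_INR; lia).
  assert (INR (2 * kh) = 2 * INR kh) by (rewrite mult_INR; simpl; lra).
  lra.
Qed.

Lemma high_plateau : (kl < B)%nat -> forall b, (kl <= b <= B)%nat -> s B <= s b.
Proof.
  intros HklB b Hb. apply Hl_dom; try lia.
  assert (INR (2 * kl) + 1 <= INR (B + b)) by (rewrite <- S_INR; apply le_INR; lia).
  rewrite plus_INR in *. lra.
Qed.

(* When B > c_l, l is indifferent between B - 1 and B, which forces h to bid B for sure. *)
Lemma high_h_dirac : (kl < B)%nat -> forall e, (e <= P)%nat -> e <> B -> t e = 0.
Proof.
  intros HklB.
  assert (Hpred : S (B - 1) = B) by lia.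
  assert (Hs_pred : 0 < s (B - 1)) by (pose proof (high_plateau HklB (B - 1) ltac:(lia)); lra).
  assert (Hindiff : U_l P (INR (2 * kl)) t (B - 1) - U_l P (INR (2 * kl)) t (S (B - 1)) = 0).
  { rewrite Hpred. pose proof (Hbr_l (B - 1) B ltac:(lia) HBP Hs_pred).
    pose proof (Hbr_l B (B - 1) HBP ltac:(lia) HsB). lra. }
  rewrite U_l_succ_loss in Hindiff by lia.
  assert (Hmargin : 0 <= t (B - 1) * (2 * INR (B - 1) - INR (2 * kl))).
  { apply Rmult_le_pos; [apply Ht; lia|].
    assert (INR kl <= INR (B - 1)) by (apply le_INR; lia).
    rewrite mult_INR. simpl (INR 2). lra. }
  assert (Hbelow : 0 <= sum_f_R0 t (B - 1)) by (apply sum_nonneg; intros; apply Ht; lia).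
  intros e He HeB. destruct (le_lt_dec e (B - 1)).
  - apply Rle_antisym; [|apply Ht; lia].
    assert (t e <= sum_f_R0 t (B - 1)) by (apply sum_ge_term; auto; intros; apply Ht; lia).
    lra.
  - apply h_top. lia.
Qed.

(* Consequently, h's strategy is the point mass at B and her expected bid is B, which
   exceeds l's expected bid since l puts weight on c_l < B. *)
Lemma high_h_at_top : (kl < B)%nat -> t B = 1.
Proof.
  intros HklB. rewrite <- (proj2 Ht). symmetry. apply sum_single; auto.
  intros; apply high_h_dirac; auto.
Qed.

Lemma high_Ebid_h : (kl < B)%nat -> Ebid P t = INR B.
Proof.
  intros HklB. unfold Ebid. rewrite (sum_single _ P B HBP).
  - rewrite high_h_at_top; auto. ring.
  - intros e He HeB. rewrite high_h_dirac; auto. ring.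
Qed.

Lemma high_Ebid_l : (kl < B)%nat -> Ebid P s < INR B.
Proof.
  intros HklB. apply (Ebid_lt_top P s B kl); auto; try lia.
  pose proof (high_plateau HklB kl ltac:(lia)). lra.
Qed.

(* h's bid B is at least as good as B - 1: the mass of l below B is bounded. *)
Lemma high_top_gain : (kl < B)%nat -> sum_f_R0 s (B - 1) <= s B * (INR (2 * kh) - 2 * INR B).
Proof.
  intros HklB. assert (Hpred : S (B - 1) = B) by lia.
  pose proof (U_h_succ_gain P (INR (2 * kh)) s (B - 1) ltac:(lia)) as Hgain.
  rewrite Hpred in Hgain.
  pose proof (Hbr_h B (B - 1) HBP ltac:(lia) ltac:(rewrite high_h_at_top; auto; lra)). lra.
Qed.

Lemma high_plateau_start : (kl < B)%nat -> exists z, (z <= kl)%nat /\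
  (forall b, (z <= b <= B)%nat -> s B <= s b) /\ (forall a, S a = z -> s a < s B).
Proof.
  intros HklB.
  destruct (min_exists (fun z => forall b, (z <= b <= B)%nat -> s B <= s b) B)
    as [z [HzB [Hz Hmin]]].
  { exists kl. split; [lia|]. apply high_plateau; auto. }
  exists z. repeat split; auto.
  - destruct (le_lt_dec z kl) as [|Hlt]; auto. exfalso. apply (Hmin kl Hlt), high_plateau; auto.
  - intros a Ha. destruct (Rlt_or_le (s a) (s B)) as [|Hle]; auto. exfalso.
    apply (Hmin a ltac:(lia)). intros b Hb.
    destruct (Nat.eq_dec b a) as [->|]; auto. apply Hz; lia.
Qed.

Section Plateau.
Variable z : nat.
Hypothesis HklB : (kl < B)%nat.
Hypothesis Hz_kl : (z <= kl)%nat.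
Hypothesis Hz_plateau : forall b, (z <= b <= B)%nat -> s B <= s b.
Hypothesis Hz_start : forall a, S a = z -> s a < s B.

(* h's indifference bound at the top against the plateau mass: 3B <= v_h + z. *)
Lemma plateau_bound_h : (3 * B <= 2 * kh + z)%nat.
Proof.
  assert (Hcount : INR (S (B - 1) - z) * s B <= sum_f_R0 s (B - 1)).
  { apply sum_ge_count; [intros; apply Hs; lia|]. intros; apply Hz_plateau; lia. }
  pose proof (high_top_gain HklB).
  replace (S (B - 1) - z)%nat with (B - z)%nat in Hcount by lia.
  rewrite minus_INR in Hcount by lia.
  assert (Hineq : INR B - INR z <= INR (2 * kh) - 2 * INR B).
  { apply (Rmult_le_reg_r (s B)); auto. lra. }
  apply INR_le. rewrite plus_INR, !mult_INR in *. simpl (INR 2) in *. simpl (INR 3). lra.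
Qed.

Lemma plateau_h_increasing : forall a, S a = z -> increasing_on (U_h P (INR (2 * kh)) s) a B.
Proof.
  intros a Ha. apply increasing_on_succ. intros e Hae HeB.
  pose proof (U_h_succ_gain P (INR (2 * kh)) s e ltac:(lia)) as Hgain.
  assert (Hpartial : sum_f_R0 s (S e) <= sum_f_R0 s (B - 1))
    by (apply sum_le_prefix; [lia|intros; apply Hs; lia]).
  cbn [sum_f_R0] in Hpartial.
  pose proof (high_top_gain HklB) as Htop.
  pose proof (Hz_plateau (S e) ltac:(lia)) as HsSe.
  assert (Hroom : INR (2 * B) < INR (2 * kh)) by (apply lt_INR; pose proof plateau_bound_h; lia).
  assert (HeB' : INR (S e) + 1 <= INR B) by (rewrite <- S_INR; apply le_INR; lia).
  rewrite mult_INR in Hroom. simpl (INR 2) in Hroom.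
  assert (s B * (INR (2 * kh) - 2 * INR B) <= s (S e) * (INR (2 * kh) - 2 * INR B))
    by (apply Rmult_le_compat_r; lra).
  nra.
Qed.

(* l's limit monotonicity bound, applied just below the plateau. *)
Lemma plateau_bound_l : z = 0%nat \/ (z + 3 * B <= 4 * kl + 1)%nat.
Proof.
  destruct (Nat.eq_dec z 0) as [|Hz0]; [left; auto|right].
  assert (Ha : S (z - 1) = z) by lia.
  pose proof (Hno_run (z - 1) B ltac:(lia) HBP (Hz_start (z - 1) Ha)
                (plateau_h_increasing (z - 1) Ha)).
  lia.
Qed.

End Plateau.

Lemma high_top_lt : (kl < B)%nat -> INR B < INR kl + t_v (2 * kl) (2 * kh).
Proof.
  intros HklB. destruct (high_plateau_start HklB) as [z [Hz_kl [Hz_plateau Hz_start]]].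
  pose proof (plateau_bound_h z HklB Hz_kl Hz_plateau) as Hh.
  pose proof (t_v_ge kl kh) as [Ht1 Ht2].
  destruct (plateau_bound_l z HklB Hz_kl Hz_plateau Hz_start) as [->|Hl].
  - assert (Hx : INR (3 * B) <= INR (2 * kh)) by (apply le_INR; lia).
    rewrite !mult_INR in Hx. simpl (INR 3) in Hx. simpl (INR 2) in Hx. lra.
  - assert (Hx : INR (6 * B) <= INR (2 * kh + 4 * kl + 1)) by (apply le_INR; lia).
    rewrite !plus_INR, !mult_INR in Hx. simpl (INR 6) in Hx. simpl (INR 4) in Hx.
    simpl (INR 2) in Hx. simpl (INR 1) in Hx. lra.
Qed.

(* When v_l >= v_h / 3, l's expected bid is at most c_l: her support lies in [0, 2 c_l]
   and her upper half is dominated by its mirror image around c_l. *)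
Lemma Ebid_l_le_netval : (kh <= 3 * kl)%nat -> Ebid P s <= INR kl.
Proof.
  intros H3. destruct (le_lt_dec B kl) as [HBkl|HklB].
  - apply Rle_trans with (INR B); [apply Ebid_le_top; auto|apply le_INR; auto].
  - assert (HB2 : (B <= 2 * kl)%nat).
    { destruct (high_plateau_start HklB) as [z [Hz_kl [Hz_plateau Hz_start]]].
      pose proof (plateau_bound_h z HklB Hz_kl Hz_plateau).
      destruct (plateau_bound_l z HklB Hz_kl Hz_plateau Hz_start); lia. }
    set (w := fun d => if Nat.leb d B then s d else 0).
    assert (Htrunc : forall g : nat -> R,
               sum_f_R0 (fun d => w d * g d) (2 * kl) = sum_f_R0 (fun d => s d * g d) P).
    { intros g. rewrite (sum_trunc _ B (2 * kl)), (sum_trunc (fun d => s d * g d) B P); auto.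
      - apply sum_eq. intros d Hd. unfold w. destruct (Nat.leb_spec d B); [reflexivity|lia].
      - intros d Hd. rewrite Hs_top by lia. ring.
      - intros d Hd. unfold w. destruct (Nat.leb_spec d B); [lia|ring]. }
    unfold Ebid. rewrite <- Htrunc. apply mean_le_center.
    + intros d Hd. unfold w. destruct (Nat.leb_spec d B); [apply Hs; lia|lra].
    + rewrite (sum_eq w (fun d => w d * 1)), Htrunc by (intros; ring).
      rewrite (sum_eq _ s) by (intros; ring). apply Hs.
    + intros d Hd. unfold w. destruct (Nat.leb_spec (2 * kl - d) B); [|lia].
      destruct (Nat.leb_spec d B); [|apply Hs; lia].
      apply Hl_dom; try lia. rewrite minus_INR by lia. lra.
Qed.

End Equilibrium.

Lemma equilibrium_bounds P kl kh (s t : nat -> R) :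
  (kl < kh)%nat -> (kh <= P)%nat -> is_NE P (INR (2 * kl)) (INR (2 * kh)) s t ->
  (forall d d', (d' <= d)%nat -> (d <= P)%nat ->
     INR (2 * kl) <= INR d + INR d' -> s d <= s d') ->
  (forall a b, (a < b)%nat -> (b <= P)%nat -> s a < s b ->
     increasing_on (U_h P (INR (2 * kh)) s) a b -> (a + 3 * b <= 2 * (2 * kl))%nat) ->
  (INR (2 * kl) >= INR (2 * kh) / 3 -> Ebid P s <= netval (2 * kl)) /\
  (netval (2 * kl) - 1 < Ebid P t /\ Ebid P t < netval (2 * kl) + t_v (2 * kl) (2 * kh)) /\
  (pi_l P (INR (2 * kl)) s t < netval (2 * kl) + t_v (2 * kl) (2 * kh) /\
   pi_h P (INR (2 * kh)) s t >
     netval (2 * kh) + (ES (2 * kl) (2 * kh) - t_v (2 * kl) (2 * kh))) /\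
  (pi_l P (INR (2 * kl)) s t > netval (2 * kl) -> Ebid P s < Ebid P t).
Proof.
  intros Hk HkP [Hs [Ht [Hbr_l Hbr_h]]] Hl_dom Hno_run.
  destruct (support_max P s Hs) as [B [HBP [HsB Hs_top]]].
  unfold ES. rewrite !netval_double.
  pose proof (t_v_ge kl kh) as [Htv _].
  assert (Hpi_l : pi_l P (INR (2 * kl)) s t <= INR B)
    by (eapply pi_l_le_top with (B := B); eauto).
  assert (Hpi_h : INR (2 * kh) - INR B <= pi_h P (INR (2 * kh)) s t)
    by (eapply pi_h_ge_top with (B := B); eauto).
  assert (Hvh : INR (2 * kh) = 2 * INR kh) by (rewrite mult_INR; simpl; lra).
  assert (INR kl < INR kh) by (apply lt_INR; lia).
  assert (HEl : INR (2 * kl) >= INR (2 * kh) / 3 -> Ebid P s <= INR kl).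
  { intros Hv. eapply Ebid_l_le_netval with (B := B) (t := t); eauto.
    apply INR_le. rewrite !mult_INR in *. simpl (INR 2) in Hv. simpl (INR 3). lra. }
  destruct (le_lt_dec B kl) as [HBkl|HklB].
  - assert (INR B <= INR kl) by (apply le_INR; lia).
    assert (Ebid P t = INR kl)
      by (eapply low_top_Ebid_h with (kh := kh) (B := B) (s := s); eauto).
    repeat split; lra.
  - assert (INR kl < INR B) by (apply lt_INR; lia).
    assert (Ebid P t = INR B)
      by (eapply high_Ebid_h with (kh := kh) (B := B) (s := s); eauto).
    assert (Ebid P s < INR B) by (eapply high_Ebid_l with (B := B); eauto).
    assert (INR B < INR kl + t_v (2 * kl) (2 * kh))
      by (eapply high_top_lt with (B := B) (s := s) (t := t); eauto).
    repeat split; lra.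
Qed.

(* Strict bounds at the limit persist along convergent sequences; the non-strict bound on
   El' becomes a strict one with slack 1. *)
Lemma bounds_persist (V : Prop) (El Eh pl ph : nat -> R) (El' Eh' pl' ph' cl ch T S : R) :
  Un_cv El El' -> Un_cv Eh Eh' -> Un_cv pl pl' -> Un_cv ph ph' ->
  (V -> El' <= cl) -> cl - 1 < Eh' -> Eh' < cl + T -> pl' < cl + T -> ph' > ch + (S - T) ->
  (pl' > cl -> El' < Eh') ->
  eventually (fun n => (V -> El n < cl + 1) /\ (cl - 1 < Eh n /\ Eh n < cl + T) /\
                       (pl n < cl + T /\ ph n > ch + (S - T)) /\ (pl' > cl -> El n < Eh n)).
Proof.
  intros cEl cEh cpl cph H1 H2a H2b H3a H3b H4.
  assert (E1 : eventually (fun n => V -> El n < cl + 1)).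
  { destruct (classic V) as [HV|HV].
    - apply (eventually_mono (fun n => El n < cl + 1)); [auto|].
      apply (eventually_lt _ _ _ _ cEl (cv_const _)). specialize (H1 HV). lra.
    - apply eventually_always. intros n HV'. contradiction. }
  assert (E4 : eventually (fun n => pl' > cl -> El n < Eh n)).
  { destruct (Rlt_or_le cl pl') as [Hp|Hp].
    - apply (eventually_mono (fun n => El n < Eh n)); [auto|].
      apply (eventually_lt _ _ _ _ cEl cEh). auto.
    - apply eventually_always. intros; lra. }
  repeat apply eventually_and; auto;
    apply (eventually_lt _ _ _ _ (cv_const _) cEh) ||
    apply (eventually_lt _ _ _ _ cEh (cv_const _)) ||
    apply (eventually_lt _ _ _ _ cpl (cv_const _)) ||
    apply (eventually_lt _ _ _ _ (cv_const _) cph); lra.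
Qed.

Theorem theorem1
  (vbar pbar vl vh : nat)
  (Hevl : Nat.Even vl) (Hevh : Nat.Even vh)
  (Hvh_le : (vh <= vbar)%nat) (Hlt : (vl < vh)%nat)
  (Hpbar : (vbar <= 2 * pbar)%nat)
  (sl sh : nat -> R)
  (HNE : is_NE pbar (INR vl) (INR vh) sl sh)
  (sll shl : nat -> nat -> R)
  (Hmix : forall lam : nat, is_mixed pbar (sll lam) /\ is_mixed pbar (shl lam))
  (Hmon : forall lam : nat,
      weakly_payoff_monotone pbar (INR vl) (INR vh) (sll lam) (shl lam))
  (Hcv : forall b : nat, (b <= pbar)%nat ->
      Un_cv (fun lam => sll lam b) (sl b) /\ Un_cv (fun lam => shl lam b) (sh b)) :
  exists Lam : nat, forall lam : nat, (Lam <= lam)%nat ->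
    (INR vl >= INR vh / 3 -> Ebid pbar (sll lam) < netval vl + 1) /\
    (netval vl - 1 < Ebid pbar (shl lam) /\
     Ebid pbar (shl lam) < netval vl + t_v vl vh) /\
    (pi_l pbar (INR vl) (sll lam) (shl lam) < netval vl + t_v vl vh /\
     pi_h pbar (INR vh) (sll lam) (shl lam) > netval vh + (ES vl vh - t_v vl vh)) /\
    (pi_l pbar (INR vl) sl sh > netval vl ->
     Ebid pbar (sll lam) < Ebid pbar (shl lam)).
Proof.
  destruct Hevl as [kl ->], Hevh as [kh ->].
  assert (Hcv_l : forall b, (b <= pbar)%nat -> Un_cv (fun n => sll n b) (sl b))
    by (intros; apply Hcv; auto).
  assert (Hcv_h : forall b, (b <= pbar)%nat -> Un_cv (fun n => shl n b) (sh b))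
    by (intros; apply Hcv; auto).
  assert (Hh_nonneg : forall n e, (e <= pbar)%nat -> 0 <= shl n e)
    by (intros n; apply (Hmix n)).
  (* The limit equilibrium inherits (a) and (b) and hence satisfies the bounds. *)
  destruct (equilibrium_bounds pbar kl kh sl sh ltac:(lia) ltac:(lia) HNE
              (limit_l_dominated pbar kl _ sll shl sl Hh_nonneg Hmon Hcv_l)
              (limit_no_long_increase pbar kl _ sll shl sl Hh_nonneg Hmon Hcv_l))
    as [L1 [[L2a L2b] [[L3a L3b] L4]]].
  (* Expected bids and payoffs converge, so the strict bounds hold eventually. *)
  exact (bounds_persist _ _ _ _ _ _ _ _ _ _ _ _ _
           (cv_Ebid_l pbar sll sl Hcv_l) (cv_Ebid_h pbar shl sh Hcv_h)
           (cv_pi_l pbar sll shl sl sh Hcv_l Hcv_h _) (cv_pi_h pbar sll shl sl sh Hcv_l Hcv_h _)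
           L1 L2a L2b L3a L3b L4).
Qed.
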